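(* Let $A\in\mathbb{R}^{n\times n}$ be entrywise nonnegative with all diagonal entries positive (no invertibility assumed). Then $A$ is a Karamardian matrix.
   Context: For $M\in\mathbb{R}^{n\times n}$ let $K_M=\mathbb{R}^n_+\cap R(M)$ and $K_M^*=\{y: x^Ty\ge 0\ \forall x\in K_M\}$ (one has $K_M^*=\mathbb{R}^n_++N(M^T)$, with interior $\{a+b: a>0,\ b\in N(M^T)\}$). For $q$, LCP$(M,K_M,q)$ is to find $x\in K_M$ with $Mx+q\in K_M^*$ and $x^T(Mx+q)=0$. $M$ is a Karamardian matrix if $K_M\ne\{0\}$ and there exists $d$ in the interior of $K_M^*$ such that both LCP$(M,K_M,0)$ and LCP$(M,K_M,d)$ have $x=0$ as their only solution. *)

From HB Require Import structures.
From mathcomp Require Import all_boot all_order all_algebra.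
From mathcomp Require Import reals.
Set Implicit Arguments. Unset Strict Implicit. Unset Printing Implicit Defensive.
Import Order.TTheory GRing.Theory Num.Theory.
Local Open Scope ring_scope.

Section Karamardian.
Variables (R : realType) (n : nat).
Implicit Types (M : 'M[R]_n) (x y q d : 'cV[R]_n).

Definition nonneg x : Prop := forall i, 0 <= x i 0.

Definition in_range M x : Prop := exists y, x = M *m y.

Definition in_KM M x : Prop := nonneg x /\ in_range M x.

Definition in_KM_dual M y : Prop :=
  forall x, in_KM M x -> 0 <= (x^T *m y) 0 0.

Definition in_int_KM_dual M d : Prop :=
  exists2 e : R, 0 < e &
    forall z : 'cV[R]_n, (forall i, `|z i 0 - d i 0| < e) -> in_KM_dual M z.

Definition LCP_sol M q x : Prop :=
  [/\ in_KM M x, in_KM_dual M (M *m x + q) & (x^T *m (M *m x + q)) 0 0 = 0].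

Definition Karamardian M : Prop :=
  (exists2 x, in_KM M x & x != 0) /\
  exists d, [/\ in_int_KM_dual M d,
               (forall x, LCP_sol M 0 x -> x = 0) &
               (forall x, LCP_sol M d x -> x = 0)].

End Karamardian.

From HB Require Import structures.
From mathcomp Require Import all_boot all_order all_algebra.
From mathcomp Require Import reals.
Set Implicit Arguments. Unset Strict Implicit. Unset Printing Implicit Defensive.
Import Order.TTheory GRing.Theory Num.Theory.
Local Open Scope ring_scope.

(* Since K_M is contained in the nonnegative orthant, every
   nonnegative vector lies in the dual cone K_M^*; in particular the all-ones
   vector 1 lies in its interior (its sup-norm ball of radius 1 consists of
   positive vectors).  We take d = 1.
   For A with nonnegative entries and positive diagonal, A x >= 0 and
   (A x)_i >= A_ii x_i whenever x >= 0.  If x solves LCP(A, K_A, q) with q >= 0,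
   the vectors x and A x + q are nonnegative with zero inner product, so
   x_i (A x + q)_i = 0 for each i; if x_i > 0 then (A x + q)_i >= A_ii x_i > 0,
   a contradiction.  Hence x = 0, which settles both q = 0 and q = 1 at once.
   Finally K_A <> {0}: any column of A is a nonnegative element of R(A), and
   it is nonzero because of its diagonal entry. *)

Section InnerProduct.
Variables (R : realType) (n : nat).
Implicit Types (M : 'M[R]_n) (x y : 'cV[R]_n).

Lemma dotE x y : (x^T *m y) 0 0 = \sum_i x i 0 * y i 0.
Proof. by rewrite !mxE; apply: eq_bigr => i _; rewrite mxE. Qed.

Lemma dot_eq0_coord x y :
  nonneg x -> nonneg y -> (x^T *m y) 0 0 = 0 -> forall i, x i 0 * y i 0 = 0.
Proof.
move=> x_ge0 y_ge0; rewrite dotE => sum0 i.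
by apply: (psumr_eq0P _ sum0) => // k _; apply: mulr_ge0.
Qed.

(* K_M lies in the nonnegative orthant, so the orthant lies in K_M^*. *)
Lemma nonneg_in_KM_dual M y : nonneg y -> in_KM_dual M y.
Proof.
move=> y_ge0 x [x_ge0 _]; rewrite dotE.
by apply: sumr_ge0 => i _; apply: mulr_ge0.
Qed.

Lemma const1_in_int_KM_dual M : in_int_KM_dual M (const_mx 1).
Proof.
exists 1 => // z near1; apply: nonneg_in_KM_dual => i.
move: (near1 i); rewrite mxE ltr_norml => /andP[lo _].
by move: lo; rewrite -(ltrD2r 1) subrK addNr => /ltW.
Qed.

End InnerProduct.

Section NonnegativeMatrix.
Variables (R : realType) (n : nat) (A : 'M[R]_n).
Hypothesis A_ge0 : forall i j, 0 <= A i j.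
Implicit Types (x q : 'cV[R]_n).

Lemma nonneg_mulmx x : nonneg x -> nonneg (A *m x).
Proof.
by move=> x_ge0 i; rewrite mxE; apply: sumr_ge0 => j _; apply: mulr_ge0.
Qed.

Lemma diag_le_mulmx x i : nonneg x -> A i i * x i 0 <= (A *m x) i 0.
Proof.
move=> x_ge0; rewrite mxE (bigD1 i) //= lerDl.
by apply: sumr_ge0 => j _; apply: mulr_ge0.
Qed.

Lemma KM_nontrivial i : 0 < A i i -> exists2 x, in_KM A x & x != 0.
Proof.
move=> Aii_gt0; exists (col i A); first split.
- by move=> k; rewrite mxE.
- by exists (delta_mx i 0); rewrite colE.
apply/eqP => /matrixP /(_ i 0); rewrite !mxE => Aii0.
by move: Aii_gt0; rewrite Aii0 ltxx.
Qed.

Hypothesis diag_gt0 : forall i, 0 < A i i.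

Lemma LCP_nonneg_trivial q : nonneg q -> forall x, LCP_sol A q x -> x = 0.
Proof.
move=> q_ge0 x [[x_ge0 _] _ compl].
have w_ge0 : nonneg (A *m x + q).
  by move=> i; rewrite mxE addr_ge0 //; apply: nonneg_mulmx.
apply/matrixP => i j; rewrite (ord1 j) mxE.
apply/eqP; rewrite eq_le x_ge0 andbT leNgt; apply/negP => xi_gt0.
have wi_gt0 : 0 < (A *m x + q) i 0.
  rewrite mxE; apply: (lt_le_trans (mulr_gt0 (diag_gt0 i) xi_gt0)).
  by rewrite -[leLHS]addr0 lerD // diag_le_mulmx.
move: (dot_eq0_coord x_ge0 w_ge0 compl i) => /eqP.
by rewrite mulf_eq0 (gt_eqF xi_gt0) (gt_eqF wi_gt0).
Qed.

End NonnegativeMatrix.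

Theorem mainTheorem16 (R : realType) (n : nat) (A : 'M[R]_n) :
  (0 < n)%N ->
  (forall i j, 0 <= A i j) ->
  (forall i, 0 < A i i) ->
  Karamardian A.
Proof.
move=> n_gt0 A_ge0 diag_gt0; split.
  exact: (KM_nontrivial A_ge0 (diag_gt0 (Ordinal n_gt0))).
exists (const_mx 1); split.
- exact: const1_in_int_KM_dual.
- by apply: (LCP_nonneg_trivial A_ge0 diag_gt0) => i; rewrite mxE.
- by apply: (LCP_nonneg_trivial A_ge0 diag_gt0) => i; rewrite mxE.
Qed.
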